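(* Assume the index sets are ordered ($\mathcal I_1=\{1,\dots,l\}$, $\mathcal I_0=\{l+1,\dots,n\}$). Let $\phi:\mathcal X^l\times\mathcal Y^n\to\mathcal X^n$ be any decoder and $\varepsilon\equiv\Pr(\phi(A\mathbf X,\mathbf Y)\neq\mathbf X)>0$. Then $$\sum_{i=l+1}^nH(C_i\mid C_1^{i-1},\mathbf Y)\le\varepsilon\Big[n+\log\frac1\varepsilon+\log e\Big],$$ where $e$ is the base of the natural logarithm and all logarithms (including in entropies) are to base $|\mathcal X|$.
   Context: $\mathcal X,\mathcal Y$ finite, $|\mathcal X|\ge2$; $(\mathbf X,\mathbf Y)$ random on $\mathcal X^n\times\mathcal Y^n$; $A:\mathcal X^n\to\mathcal X^l$; $B:\mathcal X^n\to\mathcal X^{n-l}$ such that $T(x)\equiv(Ax,Bx)\in\mathcal X^n$ (first the entries of $Ax$, then those of $Bx$) defines a bijection $T:\mathcal X^n\to\mathcal X^n$. $\mathbf C=(C_1,\dots,C_n)=T(\mathbf X)$ and $C_1^{i-1}=(C_1,\dots,C_{i-1})$. *)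

From Stdlib Require Import Reals.
From mathcomp Require Import all_boot.
Set Implicit Arguments.
Local Open Scope R_scope. Unset Strict Implicit. Unset Printing Implicit Defensive.

Definition logb (b x : R) : R := (ln x / ln b).

Notation "\rsum_ ( i | P ) F" := (\big[Rplus/0]_(i | P) F)
  (at level 41, F at level 41, i at level 50).
Notation "\rsum_ ( i : T ) F" := (\big[Rplus/0]_(i : T) F)
  (at level 41, F at level 41, i at level 50).

Definition is_distr (Om : finType) (p : Om -> R) : Prop :=
  (forall w, (0 <= p w)) /\ (\rsum_(w : Om) p w) = 1.

Definition prob (Om : finType) (p : Om -> R) (E : pred Om) : R :=
  \rsum_(w | E w) p w.

Definition condH (b : R) (Om : finType) (p : Om -> R)
  (T1 T2 : finType) (U : Om -> T1) (V : Om -> T2) : R :=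
  (- \rsum_(u : T1) \rsum_(v : T2)
       (let puv := prob p (fun w => (U w == u) && (V w == v)) in
        let pv  := prob p (fun w => V w == v) in
        if Rlt_dec 0 puv then puv * logb b (puv / pv) else 0)).

(* T(x) = (Ax, Bx) as a vector of length l + m (first Ax, then Bx). *)
Definition concat_map (X : finType) (l m : nat)
  (A : {ffun 'I_(l + m) -> X} -> {ffun 'I_l -> X})
  (B : {ffun 'I_(l + m) -> X} -> {ffun 'I_m -> X})
  (x : {ffun 'I_(l + m) -> X}) : {ffun 'I_(l + m) -> X} :=
  [ffun i => match split i with inl j => A x j | inr k => B x k end].

(* Prefix C_1^{i-1} (the first i entries, 0-based indices 0..i-1) of c. *)
Definition cprefix (X : finType) (n : nat) (i : 'I_n) (c : {ffun 'I_n -> X})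
  : {ffun 'I_i -> X} :=
  [ffun j : 'I_i => c (widen_ord (ltnW (ltn_ord i)) j)].

(* Write c = T(x) for a sample point w = (x, y), n = l + m, K = |X|^n, and let
   G_k(w) = Pr(C_1^k = c_1^k, Y = y) be the probability of the observed prefix.
   1. H(U | V) = -E[log P(U,V)/P(V)] (condH_expectation); hence the i-th term is
      -E[log G_{i+1}/G_i], and the sum over i >= l telescopes to E[log G_l/p]
      because G_n = p when T is injective (residual_entropy).
   2. Gibbs' inequality against the weights r G_l, where r = eps/K on decoding
      errors and 1 - eps + eps/K elsewhere, bounds E[log G_l/p] by
      -E[log r] + sum r G_l - 1 (gibbs_weighted).
   3. sum r G_l <= 1: on a fibre {C_1^l = Ax, Y = y} the decoder output is fixed,
      so at most one input in it is decoded correctly (fano_weight_fibre).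
   4. -E[log r] is explicit and is bounded by eps (log K + log 1/eps + log e)
      (fano_binary_bound); dividing by ln |X| gives the theorem. *)

From HB Require Import structures.
From Stdlib Require Import Reals Lra.
From mathcomp Require Import all_boot.
Local Open Scope R_scope.
Set Implicit Arguments. Unset Strict Implicit.

HB.instance Definition _ := Monoid.isComLaw.Build R 0 Rplus
  (fun a b c => esym (Rplus_assoc a b c)) Rplus_comm Rplus_0_l.
HB.instance Definition _ := Monoid.isMulLaw.Build R 0 Rmult Rmult_0_l Rmult_0_r.
HB.instance Definition _ :=
  Monoid.isAddLaw.Build R Rmult Rplus Rmult_plus_distr_r Rmult_plus_distr_l.

Lemma rsum_opp (I : Type) (r : seq I) (P : pred I) (F : I -> R) :
  - (\big[Rplus/0]_(i <- r | P i) F i) = \big[Rplus/0]_(i <- r | P i) (- F i).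
Proof. exact: (big_morph Ropp Ropp_plus_distr Ropp_0). Qed.

Lemma rsum_le (I : Type) (r : seq I) (P : pred I) (F G : I -> R) :
  (forall i, P i -> F i <= G i) ->
  \big[Rplus/0]_(i <- r | P i) F i <= \big[Rplus/0]_(i <- r | P i) G i.
Proof. exact: (big_ind2 Rle (Rle_refl 0) (fun _ _ _ _ => Rplus_le_compat _ _ _ _)). Qed.

Lemma rsum_ge0 (I : Type) (r : seq I) (P : pred I) (F : I -> R) :
  (forall i, P i -> 0 <= F i) -> 0 <= \big[Rplus/0]_(i <- r | P i) F i.
Proof. exact: (big_ind (Rle 0) (Rle_refl 0) Rplus_le_le_0_compat). Qed.

Lemma rsum_subset (I : finType) (P Q : pred I) (F : I -> R) :
  {subset P <= Q} -> (forall i, 0 <= F i) ->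
  \rsum_(i | P i) F i <= \rsum_(i | Q i) F i.
Proof.
move=> PQ F0; rewrite [X in _ <= X](bigID P) /=.
rewrite (eq_bigl P) => [|i]; last exact: andb_idl (@PQ i).
have := @rsum_ge0 I (index_enum I) (fun i => Q i && ~~ P i) F (fun i _ => F0 i); lra.
Qed.

Lemma rsum_const (I : finType) (c : R) : \rsum_(i : I) c = INR #|I| * c.
Proof.
rewrite big_const_seq count_predT (_ : size _ = #|I|); last by rewrite cardT enumT.
elim: #|I| => [|k IH]; first by rewrite Rmult_0_l.
by rewrite iterS IH S_INR; ring.
Qed.

Section Probability.
Variables (Om : finType) (p : Om -> R).
Hypothesis p_distr : is_distr p.

Lemma prob_ge0 (E : pred Om) : 0 <= prob p E.
Proof. by case: p_distr => p0 _; apply: rsum_ge0. Qed.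

Lemma prob_le1 (E : pred Om) : prob p E <= 1.
Proof. by case: p_distr => p0 <-; apply: rsum_subset. Qed.

Lemma prob_ge_point (E : pred Om) (w : Om) : E w -> p w <= prob p E.
Proof.
case: p_distr => p0 _ Ew; have <- : \rsum_(w' | w' == w) p w' = p w by rewrite big_pred1_eq.
by apply: rsum_subset => // w' /eqP ->.
Qed.

Lemma probC (E : pred Om) : prob p (predC E) = 1 - prob p E.
Proof.
case: p_distr => _ p1; rewrite -p1 [in RHS](bigID E) /= /prob.
by rewrite (eq_bigl (fun w => ~~ E w)) //; ring.
Qed.

End Probability.

Lemma rsum_fibres (Om T1 T2 : finType) (U : Om -> T1) (V : Om -> T2)
  (g : Om -> R) (F : T1 -> T2 -> R) :
  \rsum_(u : T1) \rsum_(v : T2)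
     ((\rsum_(w | (U w == u) && (V w == v)) g w) * F u v)
  = \rsum_(w : Om) (g w * F (U w) (V w)).
Proof.
rewrite pair_big (partition_big (fun w => (U w, V w)) predT) //=.
apply: eq_bigr => [[u v]] _; rewrite big_distrl /=.
by apply: eq_big => [w | w /andP[/eqP -> /eqP ->]]; rewrite ?xpair_eqE.
Qed.

Lemma condH_expectation (b : R) (Om T1 T2 : finType) (p : Om -> R)
  (U : Om -> T1) (V : Om -> T2) :
  is_distr p ->
  condH b p U V = - \rsum_(w : Om) (p w * logb b
     (prob p (fun w' => (U w' == U w) && (V w' == V w))
      / prob p (fun w' => V w' == V w))).
Proof.
move=> p_distr; rewrite /condH -(rsum_fibres U V p (fun u v =>
  logb b (prob p (fun w' => (U w' == u) && (V w' == v))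
          / prob p (fun w' => V w' == v)))).
congr Ropp; apply: eq_bigr => u _; apply: eq_bigr => v _ /=.
case: Rlt_dec => [//|not_pos] /=.
have -> : \rsum_(w | (U w == u) && (V w == v)) p w = 0.
  by have := prob_ge0 p_distr (fun w => (U w == u) && (V w == v)); rewrite /prob in not_pos *; lra.
by rewrite Rmult_0_l.
Qed.

Definition agree_upto (X : finType) (n k : nat) (c c' : {ffun 'I_n -> X}) : bool :=
  [forall j : 'I_n, (j < k)%N ==> (c j == c' j)].

Lemma cprefix_agree (X : finType) (n : nat) (i : 'I_n) (c c' : {ffun 'I_n -> X}) :
  (cprefix i c == cprefix i c') = agree_upto i c c'.
Proof.
apply/eqP/forallP => [/ffunP same j | agree].
  apply/implyP => lt_ji; have := same (Ordinal lt_ji); rewrite !ffunE.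
  have -> : widen_ord (ltnW (ltn_ord i)) (Ordinal lt_ji) = j by apply: val_inj.
  by move=> ->.
apply/ffunP => j; rewrite !ffunE; apply/eqP.
by have /implyP := agree (widen_ord (ltnW (ltn_ord i)) j); apply; rewrite /= ltn_ord.
Qed.

Lemma agree_uptoS (X : finType) (n : nat) (i : 'I_n) (c c' : {ffun 'I_n -> X}) :
  agree_upto i.+1 c c' = (c i == c' i) && agree_upto i c c'.
Proof.
apply/forallP/andP => [agree | [same_i /forallP agree] j].
  split; first by have /implyP := agree i; apply.
  by apply/forallP => j; apply/implyP => lt_ji; have /implyP := agree j; apply; apply: ltnW.
apply/implyP; rewrite ltnS leq_eqVlt => /orP[/eqP eq_ji | lt_ji].
  by rewrite (val_inj eq_ji).
by have /implyP := agree j; apply.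
Qed.

Lemma agree_upto_all (X : finType) (n : nat) (c c' : {ffun 'I_n -> X}) :
  agree_upto n c c' = (c == c').
Proof.
apply/forallP/eqP => [agree | -> j]; last by rewrite eqxx implybT.
by apply/ffunP => j; have /implyP/(_ (ltn_ord j))/eqP := agree j.
Qed.

Lemma agree_upto_encoder (X : finType) (l m : nat)
  (A : {ffun 'I_(l + m) -> X} -> {ffun 'I_l -> X})
  (B : {ffun 'I_(l + m) -> X} -> {ffun 'I_m -> X}) (x x' : {ffun 'I_(l + m) -> X}) :
  agree_upto l (concat_map A B x') (concat_map A B x) -> A x' = A x.
Proof.
move=> /forallP agree; apply/ffunP => j.
have /implyP/(_ (ltn_ord j)) := agree (lshift m j); rewrite !ffunE.
case: splitP => [j' eq_j | k /= eq_k]; last by have := ltn_ord j; rewrite eq_k ltnNge leq_addr.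
by rewrite (ord_inj (esym eq_j)) => /eqP.
Qed.

Lemma telescope_from (f : nat -> R) (l m : nat) :
  \big[Rplus/0]_(i : 'I_(l + m) | (l <= i)%N) (f i.+1 - f i) = f (l + m)%N - f l.
Proof.
rewrite -(big_mkord (fun i => l <= i)%N (fun i => f i.+1 - f i)).
elim: m => [|m IH].
  rewrite addn0 big_nat_cond big1 => [|i /andP[/andP[_ lt_il] le_li]]; first by ring.
  by have := leq_trans lt_il le_li; rewrite ltnn.
by rewrite addnS big_mkcond big_nat_recr //= -big_mkcond IH leq_addr; ring.
Qed.

Lemma ln_le_sub1 (x : R) : 0 < x -> ln x <= x - 1.
Proof. by move=> x_pos; have := exp_ineq1_le (ln x); rewrite exp_ln //; lra. Qed.

Lemma ln_ratio (x y : R) : 0 < x -> 0 < y -> ln (x / y) = ln x - ln y.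
Proof.
move=> x_pos y_pos; rewrite /Rdiv ln_mult ?ln_Rinv //; exact: Rinv_0_lt_compat.
Qed.

Lemma log_ineq_weighted (a g r : R) : 0 <= a -> a <= g -> 0 < r ->
  a * (ln g - ln a) <= - (a * ln r) + r * g - a.
Proof.
move=> a_ge0 le_ag r_pos; case: (Rle_lt_or_eq_dec 0 a a_ge0) => [a_pos | <-]; last by nra.
have rg_pos : 0 < r * g by apply: Rmult_lt_0_compat; lra.
have := ln_le_sub1 (Rdiv_lt_0_compat _ _ rg_pos a_pos).
rewrite ln_ratio // ln_mult; try lra.
move=> /(Rmult_le_compat_l a _ _ a_ge0).
have -> : a * (r * g / a - 1) = r * g - a by field; lra.
lra.
Qed.

Lemma gibbs_weighted (T : finType) (p g r : T -> R) : is_distr p ->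
  (forall w, p w <= g w) -> (forall w, 0 < r w) ->
  \rsum_(w : T) (p w * (ln (g w) - ln (p w)))
  <= - (\rsum_(w : T) (p w * ln (r w))) + (\rsum_(w : T) (r w * g w)) - 1.
Proof.
move=> [p_ge0 p_sum1] le_pg r_pos.
have -> : - (\rsum_(w : T) (p w * ln (r w))) + (\rsum_(w : T) (r w * g w)) - 1
          = \rsum_(w : T) (- (p w * ln (r w)) + r w * g w - p w).
  by rewrite /Rminus !big_split /= -!rsum_opp p_sum1.
by apply: rsum_le => w _; apply: log_ineq_weighted.
Qed.

(* The binary part of Fano's bound, with K playing the role of |X|^n. *)
Lemma fano_binary_bound (eps K : R) : 0 < eps <= 1 -> 0 < K ->
  - ((1 - eps) * ln (1 - eps + eps / K) + eps * ln (eps / K))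
  <= eps * (ln K + ln (1 / eps) + 1).
Proof.
move=> [eps_pos eps_le1] K_pos; set re := eps / K; set rc := 1 - eps + re.
have re_pos : 0 < re by apply: Rdiv_lt_0_compat.
have rc_pos : 0 < rc by rewrite /rc; lra.
have correct_term : - ((1 - eps) * ln rc) <= eps.
  have := ln_le_sub1 (Rinv_0_lt_compat _ rc_pos); rewrite ln_Rinv // => ln_inv.
  have inv_rc : rc * / rc = 1 by apply: Rinv_r; lra.
  have := Rmult_le_compat_l (1 - eps) _ _ (ltac:(lra) : 0 <= 1 - eps) ln_inv.
  have := Rmult_le_pos _ _ (Rlt_le _ _ re_pos) (Rlt_le _ _ (Rinv_0_lt_compat _ rc_pos)).
  rewrite /rc in inv_rc *; nra.
have -> : ln re = ln eps - ln K by apply: ln_ratio.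
have -> : ln (1 / eps) = - ln eps by rewrite /Rdiv Rmult_1_l ln_Rinv.
nra.
Qed.

Lemma INR_expn (a k : nat) : INR (a ^ k) = INR a ^ k.
Proof. by elim: k => [|k IH] //; rewrite expnS -multE mult_INR IH /=; ring. Qed.

Section FanoForSystematicCode.
Variables (X Y : finType) (l m : nat).
Variable A : {ffun 'I_(l + m) -> X} -> {ffun 'I_l -> X}.
Variable B : {ffun 'I_(l + m) -> X} -> {ffun 'I_m -> X}.
Variable p : ({ffun 'I_(l + m) -> X} * {ffun 'I_(l + m) -> Y})%type -> R.
Variable phi : {ffun 'I_l -> X} -> {ffun 'I_(l + m) -> Y} -> {ffun 'I_(l + m) -> X}.
Hypothesis p_distr : is_distr p.

Local Notation Om := ({ffun 'I_(l + m) -> X} * {ffun 'I_(l + m) -> Y})%type.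
Local Notation C := (concat_map A B).
Local Notation K := (INR #|{ffun 'I_(l + m) -> X}|).

Definition prefix_prob (k : nat) (w : Om) : R :=
  prob p (fun w' => agree_upto k (C w'.1) (C w.1) && (w'.2 == w.2)).

Lemma prefix_prob_ge (k : nat) (w : Om) : p w <= prefix_prob k w.
Proof.
apply: prob_ge_point => //=; rewrite eqxx andbT.
by apply/forallP => j; rewrite eqxx implybT.
Qed.

(* Since T is injective, the full codeword and y determine the sample point. *)
Lemma prefix_prob_all (w : Om) : bijective C -> prefix_prob (l + m) w = p w.
Proof.
move=> bijC; rewrite /prefix_prob /prob (eq_bigl (pred1 w)) ?big_pred1_eq //.
case: w => x y [x' y'] /=.
by rewrite agree_upto_all (inj_eq (bij_inj bijC)) xpair_eqE.
Qed.

Lemma cond_entropy_step (b : R) (i : 'I_(l + m)) :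
  condH b p (fun w => C w.1 i) (fun w => (cprefix i (C w.1), w.2))
  = - \rsum_(w : Om) (p w * logb b (prefix_prob i.+1 w / prefix_prob i w)).
Proof.
rewrite condH_expectation //; congr Ropp; apply: eq_bigr => w _.
congr (_ * logb b (_ / _)); apply: eq_bigl => w' /=.
  by rewrite xpair_eqE cprefix_agree agree_uptoS andbA.
by rewrite xpair_eqE cprefix_agree.
Qed.

(* Chain rule: the sum of the entropies of the last m coordinates given the
   past and Y telescopes to H(C | C_1^l, Y) = E[log G_l / p]. *)
Lemma residual_entropy (b : R) : bijective C ->
  \big[Rplus/0]_(i : 'I_(l + m) | (l <= i)%N)
     condH b p (fun w => C w.1 i) (fun w => (cprefix i (C w.1), w.2))
  = (\rsum_(w : Om) (p w * (ln (prefix_prob l w) - ln (p w)))) / ln b.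
Proof.
move=> bijC; have [p_ge0 _] := p_distr.
under eq_bigr do rewrite cond_entropy_step rsum_opp.
rewrite exchange_big /Rdiv [RHS]big_distrl /=; apply: eq_bigr => w _.
case: (Rle_lt_or_eq_dec 0 (p w) (p_ge0 w)) => [pw_pos | <-]; last first.
  by rewrite big1 => [|i _]; ring.
have G_pos k : 0 < prefix_prob k w by apply: Rlt_le_trans (prefix_prob_ge k w).
rewrite (eq_bigr (fun i : 'I_(l + m) => - (p w / ln b) *
  (ln (prefix_prob i.+1 w) - ln (prefix_prob i w)))) => [|i _]; last first.
  by rewrite /logb ln_ratio // /Rdiv; ring.
rewrite -big_distrr (telescope_from (fun k => ln (prefix_prob k w))).
by rewrite prefix_prob_all // /= /Rdiv; ring.
Qed.

Definition error_prob : R := prob p (fun w => phi (A w.1) w.2 != w.1).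

Definition fano_weight (w : Om) : R :=
  if phi (A w.1) w.2 != w.1 then error_prob / K else 1 - error_prob + error_prob / K.

Hypothesis error_pos : 0 < error_prob.
Hypothesis K_pos : 0 < K.

Lemma error_prob_le1 : error_prob <= 1.
Proof. exact: prob_le1. Qed.

Lemma fano_weight_pos (w : Om) : 0 < fano_weight w.
Proof.
have := Rdiv_lt_0_compat _ _ error_pos K_pos; have := error_prob_le1.
by rewrite /fano_weight; case: ifP => _; lra.
Qed.

(* Within a fibre {C_1^l = c_1^l, Y = y} the decoder output is fixed, so at
   most one input vector is decoded correctly: the weights sum to 1. *)
Lemma fano_weight_fibre (w' : Om) :
  \rsum_(w | agree_upto l (C w'.1) (C w.1) && (w'.2 == w.2)) fano_weight w <= 1.
Proof.
set x0 := phi (A w'.1) w'.2.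
pose s x := if x0 != x then error_prob / K else 1 - error_prob + error_prob / K.
have s_ge0 x : 0 <= s x.
  have := Rdiv_lt_0_compat _ _ error_pos K_pos; have := error_prob_le1.
  by rewrite /s; case: ifP => _; lra.
rewrite (eq_bigr (fun w => s w.1)) => [|w /andP[/agree_upto_encoder A_eq /eqP y_eq]]; last first.
  by rewrite /fano_weight /s /x0 A_eq y_eq.
have fibre_in_slice : {subset [pred w | agree_upto l (C w'.1) (C w.1) && (w'.2 == w.2)]
                        <= [pred w : Om | xpredT w.1 && (w.2 == w'.2)]}.
  by move=> w; rewrite !inE eq_sym => /andP[].
apply: Rle_trans (rsum_subset fibre_in_slice (fun w => s_ge0 w.1)) _.
have -> : \rsum_(w | [pred w : Om | xpredT w.1 && (w.2 == w'.2)] w) s w.1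
          = \rsum_(x : {ffun 'I_(l + m) -> X}) s x.
  rewrite -(pair_big_dep xpredT (fun _ y => y == w'.2) (fun x _ => s x)).
  by apply: eq_bigr => x _; rewrite big_pred1_eq.
have const_sum := rsum_const {ffun 'I_(l + m) -> X} (error_prob / K).
rewrite (bigD1 x0) // in const_sum; rewrite (bigD1 x0) //.
rewrite (eq_bigr (fun _ => error_prob / K)) => [|x /= ne_x]; last by rewrite /s eq_sym ne_x.
have -> : s x0 = 1 - error_prob + error_prob / K by rewrite /s eqxx.
have cancel_K : K * (error_prob / K) = error_prob by field; lra.
move: const_sum => /=; rewrite cancel_K => const_sum.
rewrite Rplus_assoc const_sum; lra.
Qed.

(* Summing the fibre bound against p: the weights r G_l have mass at most 1. *)
Lemma fano_weight_mass : \rsum_(w : Om) (fano_weight w * prefix_prob l w) <= 1.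
Proof.
have [p_ge0 p_sum1] := p_distr; rewrite -[X in _ <= X]p_sum1.
have -> : \rsum_(w : Om) (fano_weight w * prefix_prob l w) = \rsum_(w' : Om)
   (p w' * \rsum_(w | agree_upto l (C w'.1) (C w.1) && (w'.2 == w.2)) fano_weight w).
  rewrite /prefix_prob /prob; under eq_bigr => w _ do rewrite big_distrr big_mkcond.
  rewrite exchange_big; apply: eq_bigr => w' _; rewrite big_distrr [RHS]big_mkcond.
  by apply: eq_bigr => w _ /=; case: ifP => _; ring.
apply: rsum_le => w' _; rewrite -[X in _ <= X]Rmult_1_r.
exact: Rmult_le_compat_l (p_ge0 w') (fano_weight_fibre w').
Qed.

Lemma fano_weight_log : \rsum_(w : Om) (p w * ln (fano_weight w))
  = (1 - error_prob) * ln (1 - error_prob + error_prob / K)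
    + error_prob * ln (error_prob / K).
Proof.
rewrite (bigID (fun w => phi (A w.1) w.2 != w.1)) /=.
rewrite (eq_bigr (fun w => p w * ln (error_prob / K))) => [|w err]; last first.
  by rewrite /fano_weight err.
rewrite [X in _ + X](eq_bigr (fun w => p w * ln (1 - error_prob + error_prob / K)));
  last by move=> w /negbTE ok; rewrite /fano_weight ok.
rewrite -!big_distrl /=.
have -> : \rsum_(w | ~~ (phi (A w.1) w.2 != w.1)) p w = 1 - error_prob.
  exact: (probC p_distr (fun w => phi (A w.1) w.2 != w.1)).
by rewrite -/(prob p (fun w => phi (A w.1) w.2 != w.1)) -/error_prob; ring.
Qed.

Lemma residual_fano_bound :
  \rsum_(w : Om) (p w * (ln (prefix_prob l w) - ln (p w)))
  <= error_prob * (ln K + ln (1 / error_prob) + 1).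
Proof.
apply: Rle_trans (gibbs_weighted p_distr (@prefix_prob_ge l) fano_weight_pos) _.
rewrite fano_weight_log /Rminus.
apply: Rle_trans (Rplus_le_compat_r _ _ _ (Rplus_le_compat_l _ _ _ fano_weight_mass)) _.
rewrite Rplus_assoc Rplus_opp_r Rplus_0_r.
exact: fano_binary_bound (conj error_pos error_prob_le1) K_pos.
Qed.

End FanoForSystematicCode.

Unset Implicit Arguments.

Theorem mainTheorem9 (X Y : finType) (l m : nat)
  (A : {ffun 'I_(l + m) -> X} -> {ffun 'I_l -> X})
  (B : {ffun 'I_(l + m) -> X} -> {ffun 'I_m -> X})
  (p : ({ffun 'I_(l + m) -> X} * {ffun 'I_(l + m) -> Y})%type -> R)
  (phi : {ffun 'I_l -> X} -> {ffun 'I_(l + m) -> Y} -> {ffun 'I_(l + m) -> X}) :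
  (2 <= #|X|)%N ->
  bijective (concat_map A B) ->
  is_distr p ->
  let b := INR #|X| in
  let eps := prob p (fun w => phi (A w.1) w.2 != w.1) in
  (0 < eps) ->
  (\big[Rplus/0]_(i : 'I_(l + m) | (l <= i)%N)
      condH b p (fun w => concat_map A B w.1 i)
                (fun w => (cprefix i (concat_map A B w.1), w.2))
   <= eps * (INR (l + m) + logb b (1 / eps) + logb b (exp 1))).
Proof.
move=> two_le_X bijC p_distr b eps eps_pos.
have b_ge2 : 2 <= b by rewrite /b; change 2 with (INR 2); apply/le_INR/leP.
have lnb_pos : 0 < ln b by rewrite -ln_1; apply: ln_increasing; lra.
have card_inputs : INR #|{ffun 'I_(l + m) -> X}| = b ^ (l + m).
  by rewrite card_ffun card_ord INR_expn.
have inputs_pos : 0 < INR #|{ffun 'I_(l + m) -> X}|.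
  by rewrite card_inputs; apply: pow_lt; lra.
rewrite residual_entropy //.
have fano := @residual_fano_bound X Y l m A B p phi p_distr eps_pos inputs_pos.
apply: Rle_trans (Rmult_le_compat_r _ _ _ (Rlt_le _ _ (Rinv_0_lt_compat _ lnb_pos)) fano) _.
right; rewrite /logb ln_exp card_inputs ln_pow; last lra.
by rewrite /eps /error_prob; field; lra.
Qed.
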